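(* The finitary group $F$ and the full isometry group $W$ of the rooted tree $X^*$ are layered and saturated.
   Context: $X$ is a finite alphabet with $|X|\ge2$, $\mathcal T=X^*$, $W=\mathrm{Aut}(\mathcal T)$. $\mathrm{Sym}(X)$ acts on $\mathcal T$ by $(x_1x_2\cdots x_n)^\pi=x_1^\pi x_2\cdots x_n$. For $v\in X^*$, $g\in W$: $v*g$ acts as $g$ on the subtree $v\mathcal T$ ($(vw)^{v*g}=vw^g$) and fixes other vertices; $g@v$ is the state, $(vw)^g=v^gw^{g@v}$. The finitary group is $F=\langle v*\pi: v\in X^*,\pi\in\mathrm{Sym}(X)\rangle$. $G\le W$ is layered if it is transitive on every $X^n$ and $x*G\le G$ for all $x\in X$; saturated if for every $n$ it contains a characteristic subgroup $H_n$ fixing $X^n$ with $\{h@v:h\in H_n\}$ transitive on each level of $\mathcal T$ for every $v\in X^n$. *)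

(* Tree X^* = seq X; elements of W are functions seq X -> seq X.
   Groups act on the RIGHT: v^(g h) = (v^g)^h, so the product g*h is [tmul g h]. *)
From mathcomp Require Import all_boot all_fingroup.
Set Implicit Arguments. Unset Strict Implicit. Unset Printing Implicit Defensive.

Section Tree.
Variable X : finType.
Definition vmap := seq X -> seq X.

Definition tmul (g h : vmap) : vmap := fun w => h (g w).
Definition tone : vmap := fun w => w.

Definition is_tree_aut (g : vmap) : Prop :=
  bijective g /\ (forall w, size (g w) = size w) /\
  (forall (n : nat) w, g (take n w) = take n (g w)).

Definition W : vmap -> Prop := is_tree_aut.

Definition subgroupW (G : vmap -> Prop) : Prop :=
  (forall g, G g -> W g) /\ G tone /\
  (forall g h, G g -> G h -> G (tmul g h)) /\
  (forall g, G g -> exists h, G h /\ tmul g h = tone /\ tmul h g = tone).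

Definition perm_act (pi : {perm X}) : vmap :=
  fun w => match w with [::] => [::] | x :: w' => pi x :: w' end.

Definition vstar (v : seq X) (g : vmap) : vmap :=
  fun u => if take (size v) u == v then v ++ g (drop (size v) u) else u.

(* state g @ v : (vw)^g = v^g w^(g@v) *)
Definition state (g : vmap) (v : seq X) : vmap :=
  fun w => drop (size v) (g (v ++ w)).

Definition F : vmap -> Prop :=
  fun g => forall G, subgroupW G ->
    (forall (v : seq X) (pi : {perm X}), G (vstar v (perm_act pi))) -> G g.

Definition level_transitive (G : vmap -> Prop) (n : nat) : Prop :=
  forall u w : seq X, size u = n -> size w = n -> exists g, G g /\ g u = w.

Definition layered (G : vmap -> Prop) : Prop :=
  subgroupW G /\ (forall n, level_transitive G n) /\
  (forall (x : X) g, G g -> G (vstar [:: x] g)).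

Definition group_auto (G : vmap -> Prop) (phi : vmap -> vmap) : Prop :=
  (forall g, G g -> G (phi g)) /\
  (forall g1 g2, G g1 -> G g2 -> phi g1 = phi g2 -> g1 = g2) /\
  (forall g, G g -> exists g', G g' /\ phi g' = g) /\
  (forall g1 g2, G g1 -> G g2 -> phi (tmul g1 g2) = tmul (phi g1) (phi g2)).

Definition characteristic (H G : vmap -> Prop) : Prop :=
  subgroupW H /\ (forall h, H h -> G h) /\
  (forall phi, group_auto G phi ->
     (forall h, H h -> H (phi h)) /\
     (forall h, H h -> exists h', H h' /\ phi h' = h)).

Definition saturated (G : vmap -> Prop) : Prop :=
  forall n : nat, exists H : vmap -> Prop,
    characteristic H G /\
    (forall h, H h -> forall u : seq X, size u = n -> h u = u) /\
    (forall v : seq X, size v = n ->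
       forall m, level_transitive (fun k => exists2 h, H h & k = state h v) m).
End Tree.

From Pilot Require Import Defs.
From mathcomp Require Import all_boot all_fingroup.
From Stdlib Require Import Classical FunctionalExtensionality PropExtensionality Wf_nat.
Set Implicit Arguments. Unset Strict Implicit. Unset Printing Implicit Defensive.

(* Both groups contain the root permutations and are closed under [x * _], so
   induction on the level gives level transitivity; both are also closed under
   taking states.  For saturation fix a level n, let e be the exponent of the
   action of G on X^n and let H be generated by the e-th powers of G: H fixes
   X^n, and it is characteristic because automorphisms permute e-th powers.
   For v in X^n, the k such that every c^k (c in G) is a state of H at v form
   an ideal of nat containing e.  For a prime p dividing e pick g1 in G whose
   orbit through v has a length L carrying the full p-part of e; twisting g1 by
   v * d yields g with g^L fixing v and with any prescribed state c at v, so
   the state of g^e at v is c^(e/L), and p does not divide e/L.  Hence the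
   ideal contains 1: every c in G is a state of H at v, and G is level
   transitive. *)

Lemma ex_minimal_nat (P : nat -> Prop) :
  (exists n, P n) -> exists n, P n /\ forall m, P m -> n <= m.
Proof.
move=> exP.
have [n [[Pn n_min] _]] :=
  dec_inh_nat_subset_has_unique_least_element P (fun n => classic (P n)) exP.
by exists n; split=> // m /n_min/leP.
Qed.

Lemma nat_ideal_dvd (P : nat -> Prop) e : 0 < e -> P e ->
    (forall a b, P a -> P b -> P (a + b)) ->
    (forall a b, b <= a -> P a -> P b -> P (a - b)) ->
  exists2 d, 0 < d & forall k, P k <-> d %| k.
Proof.
move=> e_gt0 Pe P_add P_sub.
have [d [[d_gt0 Pd] d_min]] :=
  ex_minimal_nat (ex_intro (fun d => 0 < d /\ P d) e (conj e_gt0 Pe)).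
have P_mul q : P (q * d).
  elim: q => [|q IHq]; first by rewrite mul0n -(subnn d); exact: P_sub.
  by rewrite mulSn; exact: P_add.
exists d => // k; split=> [Pk | /dvdnP[q ->] //].
have P_mod : P (k %% d).
  have -> : k %% d = k - k %/ d * d by rewrite {2}(divn_eq k d) addKn.
  exact: P_sub (leq_divM k d) Pk (P_mul _).
rewrite /dvdn; case: (posnP (k %% d)) => // mod_gt0.
by have := d_min _ (conj mod_gt0 P_mod); rewrite leqNgt ltn_pmod.
Qed.

Lemma prime_ndvd_div_pfactor p e L : prime p -> 0 < e -> L %| e ->
  p ^ logn p e %| L -> ~~ (p %| e %/ L).
Proof.
move=> p_pr e_gt0 Le pL; apply/negP => p_div.
have : p ^ (logn p e).+1 %| e.
  by rewrite -{2}(divnK Le) expnSr [p ^ _ * p]mulnC dvdn_mul.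
by rewrite pfactor_dvdn // ltnn.
Qed.

Lemma dvdn_div_prime p e L : prime p -> p %| e -> L %| e ->
  ~~ (p ^ logn p e %| L) -> L %| e %/ p.
Proof.
move=> p_pr pe /dvdnP[q def_e] npL.
have pq : p %| q.
  apply: contraR npL => npq.
  have cop : coprime (p ^ logn p e) q by apply: coprimeXl; rewrite prime_coprime.
  by rewrite -(Gauss_dvdr _ cop) -def_e pfactor_dvdnn.
by rewrite def_e -(divn_mulAC _ pq) dvdn_mull.
Qed.

Lemma iter_period (T : Type) (f : T -> T) x e : 0 < e -> iter e f x = x ->
  exists2 L, 0 < L & forall k, iter k f x = x <-> L %| k.
Proof.
move=> e_gt0 fx; apply: nat_ideal_dvd e_gt0 fx _ _ => [a b fa fb | a b ba fa fb].
  by rewrite iterD fb fa.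
by rewrite -{1}fb -iterD subnK.
Qed.

Lemma iter_conjugate (T : Type) (f t ti : T -> T) : cancel t ti -> cancel ti t ->
  forall k x, iter k (fun y => ti (f (t y))) x = ti (iter k f (t x)).
Proof. by move=> tK tiK; elim=> [|k IHk] x; rewrite /= ?tK // IHk tiK. Qed.

Lemma prefix_comparable (T : eqType) (a b s : seq T) :
  prefix a s -> prefix b s -> prefix a b || prefix b a.
Proof.
rewrite !prefixE => /eqP Ea /eqP Eb.
case: (leqP (size a) (size b)) => [ab | /ltnW ba]; apply/orP; [left | right].
  by rewrite -Eb take_takel // Ea.
by rewrite -Ea take_takel // Eb.
Qed.

Section TreeAutomorphisms.
Variable X : finType.
Local Notation vm := (vmap X).
Local Notation W := (@W X).
Local Notation tone := (@tone X).
Implicit Types (f g h d : vm) (u v w y : seq X) (G : vm -> Prop).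

Definition tinverse g h := tmul g h = tone /\ tmul h g = tone.

Lemma tinverseP g h : tinverse g h <-> cancel g h /\ cancel h g.
Proof.
split=> [[gh hg] | [gK hK]]; last by split; apply: functional_extensionality.
by split=> w; [exact: (congr1 (fun f => f w) gh) | exact: (congr1 (fun f => f w) hg)].
Qed.

Lemma tinverse_sym g h : tinverse g h -> tinverse h g.
Proof. by case. Qed.

Lemma tinverse_tmul g1 h1 g2 h2 :
  tinverse g1 h1 -> tinverse g2 h2 -> tinverse (tmul g1 g2) (tmul h2 h1).
Proof.
move=> /tinverseP[g1K h1K] /tinverseP[g2K h2K].
by apply/tinverseP; split=> w; rewrite /tmul ?g2K ?g1K ?h1K ?h2K.
Qed.

Lemma tinverse_uniq g h h' : tinverse g h -> tinverse g h' -> h = h'.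
Proof.
move=> /tinverseP[gK hK] /tinverseP[_ h'K].
by apply: functional_extensionality => w; rewrite -{1}(h'K w) gK.
Qed.

Lemma subgroupW_W G g : subgroupW G -> G g -> W g.
Proof. by case=> + _; apply. Qed.

Lemma subgroupW_tone G : subgroupW G -> G tone.
Proof. by case=> _ []. Qed.

Lemma subgroupW_tmul G g h : subgroupW G -> G g -> G h -> G (tmul g h).
Proof. by case=> _ [_ [+ _]]; apply. Qed.

Lemma subgroupW_inverse G g : subgroupW G -> G g -> exists h, G h /\ tinverse g h.
Proof. by case=> _ [_ [_ +]]; apply. Qed.

Lemma subgroupW_tinverse G g h : subgroupW G -> G g -> tinverse g h -> G h.
Proof.
move=> subG Gg gh; have [h' [Gh' gh']] := subgroupW_inverse subG Gg.
by rewrite (tinverse_uniq gh gh').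
Qed.

Lemma W_size g : W g -> forall w, size (g w) = size w.
Proof. by case=> _ []. Qed.

Lemma W_take g : W g -> forall n w, g (take n w) = take n (g w).
Proof. by case=> _ []. Qed.

Lemma W_inj g : W g -> injective g.
Proof. by case=> /bij_inj. Qed.

Lemma W_nil g : W g -> g [::] = [::].
Proof. by move=> Wg; apply/eqP; rewrite -size_eq0 (W_size Wg). Qed.

Lemma W_cat g v w : W g -> g (v ++ w) = g v ++ state g v w.
Proof.
move=> Wg; rewrite -{1}(cat_take_drop (size v) (g (v ++ w))).
by rewrite -(W_take Wg) take_size_cat.
Qed.

Lemma W_tone : W tone.
Proof. by split; [exists id | split]. Qed.

Lemma W_tmul g h : W g -> W h -> W (tmul g h).
Proof.
move=> Wg Wh; split; first exact: bij_comp (proj1 Wh) (proj1 Wg).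
by split=> [w | n w]; rewrite /tmul ?(W_size Wh, W_size Wg) ?(W_take Wg, W_take Wh).
Qed.

Lemma W_inverse g : W g -> exists h, W h /\ tinverse g h.
Proof.
move=> Wg; have [h gK hK] := proj1 Wg.
exists h; split; last exact/tinverseP.
split; first by exists g.
split=> [w | n w]; first by rewrite -(W_size Wg) hK.
by apply: (W_inj Wg); rewrite hK (W_take Wg) hK.
Qed.

Lemma W_subgroup : subgroupW W.
Proof. by split=> //; split; [exact: W_tone | split; [exact: W_tmul | exact: W_inverse]]. Qed.

Lemma state_tone v : state tone v = tone.
Proof. by apply: functional_extensionality => w; rewrite /state drop_size_cat. Qed.

Lemma state_tmul g h v : W g -> W h ->
  state (tmul g h) v = tmul (state g v) (state h (g v)).
Proof.
move=> Wg Wh; apply: functional_extensionality => w.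
rewrite {1}/state /tmul (W_cat _ _ Wg) (W_cat _ _ Wh) drop_size_cat //.
by rewrite (W_size Wh) (W_size Wg).
Qed.

Lemma state_tinverse g h v : W g -> W h -> tinverse g h ->
  tinverse (state g v) (state h (g v)).
Proof.
move=> Wg Wh /[dup] gh /tinverseP[gK _]; case: gh => gh hg.
split; first by rewrite -state_tmul // gh state_tone.
by rewrite -{2}(gK v) -state_tmul // hg state_tone.
Qed.

Lemma W_state g v : W g -> W (state g v).
Proof.
move=> Wg; have [h [Wh gh]] := W_inverse Wg.
have /tinverseP[gK _] := gh.
have /tinverseP[sK _] := state_tinverse v Wg Wh gh.
have /tinverseP[sKV _] := state_tinverse (g v) Wh Wg (tinverse_sym gh).
rewrite gK in sKV.
split; first by exists (state h (g v)).
split=> [w | n w]; rewrite /state.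
  by rewrite size_drop (W_size Wg) size_cat addKn.
have -> : v ++ take n w = take (size v + n) (v ++ w).
  by rewrite takeD take_size_cat ?drop_size_cat.
rewrite (W_take Wg) (W_cat _ _ Wg) takeD take_size_cat ?(W_size Wg) //.
by rewrite !drop_size_cat ?(W_size Wg) // size_takel // size_cat (W_size Wg) leq_addr.
Qed.

Lemma vstarE v g u :
  vstar v g u = if prefix v u then v ++ g (drop (size v) u) else u.
Proof. by rewrite /vstar prefixE. Qed.

Lemma vstar_prefix v g w : vstar v g (v ++ w) = v ++ g w.
Proof. by rewrite vstarE prefix_prefix drop_size_cat. Qed.

Lemma vstar_out v g u : ~~ prefix v u -> vstar v g u = u.
Proof. by rewrite vstarE => /negPf->. Qed.

Lemma vstar_nil g : vstar [::] g = g.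
Proof. by apply: functional_extensionality => w; rewrite -[w]cat0s vstar_prefix. Qed.

Lemma vstar_cat_prefix u v g w : vstar (u ++ v) g (u ++ w) = u ++ vstar v g w.
Proof.
case: (boolP (prefix v w)) => [/prefixP[w' ->] | vw].
  by rewrite catA !vstar_prefix catA.
by rewrite !vstar_out // prefix_catr ?eqxx.
Qed.

Lemma vstar_cat u v g : vstar (u ++ v) g = vstar u (vstar v g).
Proof.
apply: functional_extensionality => w.
case: (boolP (prefix u w)) => [/prefixP[w' ->] | uw].
  by rewrite vstar_cat_prefix vstar_prefix.
by rewrite !vstar_out //; apply: contra uw; exact: catl_prefix.
Qed.

Lemma vstar_tmul v f g : vstar v (tmul f g) = tmul (vstar v f) (vstar v g).
Proof.
apply: functional_extensionality => u; rewrite /tmul.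
case: (boolP (prefix v u)) => [/prefixP[w ->] | vu]; first by rewrite !vstar_prefix.
by rewrite !vstar_out.
Qed.

Lemma vstar_tone v : vstar v tone = tone.
Proof.
apply: functional_extensionality => u.
by case: (boolP (prefix v u)) => [/prefixP[w ->] | /vstar_out]; rewrite ?vstar_prefix.
Qed.

Lemma vstar_tinverse v g h : tinverse g h -> tinverse (vstar v g) (vstar v h).
Proof. by case=> gh hg; split; rewrite -vstar_tmul ?gh ?hg vstar_tone. Qed.

Lemma W_vstar v g : W g -> W (vstar v g).
Proof.
move=> Wg; have [h [_ gh]] := W_inverse Wg.
have /tinverseP[vgK vhK] := vstar_tinverse v gh.
split; first by exists (vstar v h).
split=> [u | n u].
  case: (boolP (prefix v u)) => [/prefixP[w ->] | /vstar_out-> //].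
  by rewrite vstar_prefix !size_cat (W_size Wg).
case: (boolP (prefix v u)) => [/prefixP[w ->] | vu]; last first.
  rewrite !vstar_out //; apply: contra vu => /prefix_trans; apply.
  exact: prefix_take.
rewrite vstar_prefix !take_cat.
case: ltnP => [nv | vn].
  by rewrite vstar_out //; apply/negP => /size_prefix; rewrite size_take nv leqNgt nv.
by rewrite vstar_prefix (W_take Wg).
Qed.

Lemma vstar_fix v g u : W g -> size u = size v -> vstar v g u = u.
Proof.
move=> Wg uv; case: (boolP (prefix v u)) => [/prefixP[w def_u] | /vstar_out //].
move: uv; rewrite def_u size_cat -{2}[size v]addn0 => /eqP; rewrite eqn_add2l size_eq0.
by move=> /eqP->; rewrite vstar_prefix (W_nil Wg).
Qed.

Lemma state_vstar_self v g : state (vstar v g) v = g.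
Proof.
by apply: functional_extensionality => w; rewrite /state vstar_prefix drop_size_cat.
Qed.

Lemma state_vstar_other v g u : size u = size v -> u != v -> state (vstar v g) u = tone.
Proof.
move=> uv neq_uv; apply: functional_extensionality => w.
by rewrite /state vstar_out ?drop_size_cat // prefixE take_size_cat // eq_sym.
Qed.

Lemma state_vstar_cat v u g : state (vstar (v ++ u) g) v = vstar u g.
Proof.
by apply: functional_extensionality => w; rewrite /state vstar_cat_prefix drop_size_cat.
Qed.

Lemma state_vstar_prefix u v g : state (vstar u g) (u ++ v) = state g v.
Proof.
apply: functional_extensionality => w.
by rewrite /state -catA vstar_prefix size_cat addnC -drop_drop drop_size_cat.
Qed.

Lemma state_vstar_incomparable u v g : ~~ prefix u v -> ~~ prefix v u ->
  state (vstar u g) v = tone.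
Proof.
move=> uv vu; apply: functional_extensionality => w.
rewrite /state vstar_out ?drop_size_cat //; apply/negP => u_vw.
by have := prefix_comparable u_vw (prefix_prefix v w); rewrite (negbTE uv) (negbTE vu).
Qed.

Lemma W_perm_act (pi : {perm X}) : W (perm_act pi).
Proof.
split; first by exists (perm_act pi^-1); case=> [|x w] //=; rewrite ?permK ?permKV.
by split; [case | move=> [|n] [|x w]].
Qed.

Lemma state_perm_act_cons (pi : {perm X}) x v : state (perm_act pi) (x :: v) = tone.
Proof. by apply: functional_extensionality => w; rewrite /state /= drop_size_cat. Qed.

Lemma perm_act_tinverse (pi : {perm X}) : tinverse (perm_act pi) (perm_act pi^-1).
Proof. by apply/tinverseP; split; case=> [|x w] //=; rewrite ?permK ?permKV. Qed.

Definition gpow g k : vm := fun w => iter k g w.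

Lemma gpow1 g : gpow g 1 = g.
Proof. by []. Qed.

Lemma gpowS g k : gpow g k.+1 = tmul (gpow g k) g.
Proof. by []. Qed.

Lemma gpowD g a b : gpow g (a + b) = tmul (gpow g a) (gpow g b).
Proof. by apply: functional_extensionality => w; rewrite /gpow /tmul addnC iterD. Qed.

Lemma gpowM g q k : gpow g (q * k) = gpow (gpow g k) q.
Proof.
apply: functional_extensionality => w; rewrite /gpow.
by elim: q => [//|q IHq]; rewrite mulSn iterD IHq.
Qed.

Lemma W_gpow g k : W g -> W (gpow g k).
Proof. by move=> Wg; elim: k => [|k IHk]; [exact: W_tone | rewrite gpowS; exact: W_tmul]. Qed.

Lemma subgroupW_gpow G g k : subgroupW G -> G g -> G (gpow g k).
Proof.
move=> subG Gg; elim: k => [|k IHk]; first exact: subgroupW_tone.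
by rewrite gpowS; exact: subgroupW_tmul.
Qed.

Lemma tinverse_gpow g h k : tinverse g h -> tinverse (gpow g k) (gpow h k).
Proof.
move=> /tinverseP[gK hK]; apply/tinverseP; split=> w; rewrite /gpow.
  by elim: k w => [//|k IHk] w; rewrite iterSr /= gK IHk.
by elim: k w => [//|k IHk] w; rewrite iterSr /= hK IHk.
Qed.

Lemma state_gpow_fix g v k : W g -> g v = v -> state (gpow g k) v = gpow (state g v) k.
Proof.
move=> Wg gv; elim: k => [|k IHk]; first exact: state_tone.
rewrite gpowS state_tmul //; last exact: W_gpow.
by rewrite IHk /gpow (iter_fix _ gv).
Qed.

Lemma gpow_vstar_tmul_level v d g k y : W d -> W g -> size y = size v ->
  gpow (tmul (vstar v d) g) k y = gpow g k y.
Proof.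
move=> Wd Wg yv; elim: k => [//|k IHk].
rewrite /gpow /= -/(gpow _ k y) IHk /tmul vstar_fix //.
by rewrite (W_size (W_gpow k Wg)).
Qed.

Lemma state_vstar_tmul v d g y : W d -> W g -> size y = size v ->
  state (tmul (vstar v d) g) y = if y == v then tmul d (state g v) else state g y.
Proof.
move=> Wd Wg yv; rewrite state_tmul ?vstar_fix //; last exact: W_vstar.
by case: eqP => [-> | /eqP neq_yv]; rewrite ?state_vstar_self ?state_vstar_other.
Qed.

Lemma state_gpow_vstar_tmul v d g k : W d -> W g -> 0 < k ->
    (forall j, 0 < j < k -> iter j g v != v) ->
  state (gpow (tmul (vstar v d) g) k) v = tmul d (state (gpow g k) v).
Proof.
move=> Wd Wg; case: k => // k _; elim: k => [|k IHk] no_return.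
  by rewrite !gpow1 state_vstar_tmul // eqxx.
have Wvdg : W (tmul (vstar v d) g) by apply: W_tmul; [apply: W_vstar|].
have size_gk : size (gpow g k.+1 v) = size v by rewrite (W_size (W_gpow _ Wg)).
rewrite gpowS state_tmul; [|exact: W_gpow | by []].
rewrite IHk; last by move=> j /andP[j_gt0 j_lt]; apply: no_return; rewrite j_gt0 ltnW.
rewrite gpow_vstar_tmul_level // state_vstar_tmul // (negbTE (no_return k.+1 (ltnSn _))).
by rewrite [in RHS]gpowS [in RHS]state_tmul //; exact: W_gpow.
Qed.

Lemma W_level_exponent n : exists2 N, 0 < N &
  forall g, W g -> forall u, size u = n -> iter N g u = u.
Proof.
pose T := n.-tuple X; pose N := #|[set: {perm T}]|.
exists N => [|g Wg u size_u]; first exact: (cardG_gt0 [set: {perm T}]%G).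
have size_g (t : T) : size (g t) == n by rewrite (W_size Wg) size_tuple.
pose gT (t : T) : T := Tuple (size_g t).
have gT_inj : injective gT by move=> t1 t2 /(congr1 val) /(W_inj Wg) /val_inj.
pose s := perm gT_inj.
have iter_s k (t : T) : val (iter k s t) = iter k g (val t).
  by elim: k => [//|k IHk]; rewrite /= permE /= IHk.
have /eqP size_u' := size_u.
have : #[s]%g %| N by apply: cardSg; apply: subsetT.
move/dvdnP=> [q N_eq]; rewrite -[u]/(val (Tuple size_u')) -iter_s -permX N_eq.
by rewrite mulnC expgnA expg_order expg1n perm1.
Qed.

Definition gen (S : vm -> Prop) : vm -> Prop :=
  fun g => forall G, subgroupW G -> (forall s, S s -> G s) -> G g.

Lemma gen_min S G : subgroupW G -> (forall s, S s -> G s) -> forall g, gen S g -> G g.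
Proof. by move=> subG SG g; apply. Qed.

Lemma mem_gen S s : S s -> gen S s.
Proof. by move=> Ss G _; apply. Qed.

Lemma gen_tone S : gen S tone.
Proof. by move=> G subG _; exact: subgroupW_tone. Qed.

Lemma gen_tmul S g h : gen S g -> gen S h -> gen S (tmul g h).
Proof. by move=> Sg Sh G subG SG; apply: subgroupW_tmul; [|apply: Sg|apply: Sh]. Qed.

Lemma subgroupW_gen S : (forall s, S s -> W s) ->
  (forall s, S s -> exists t, S t /\ tinverse s t) -> subgroupW (gen S).
Proof.
move=> SW S_inv; have genW := gen_min W_subgroup SW.
pose P g := gen S g /\ exists h, gen S h /\ tinverse g h.
suff genP : forall g, gen S g -> P g.
  by split=> //; split; [exact: gen_tone | split; [exact: gen_tmul | move=> g /genP[]]].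
apply: gen_min => [|s Ss]; last first.
  have [t [St st]] := S_inv s Ss.
  by split; [exact: mem_gen | exists t; split; [exact: mem_gen|]].
split; first by move=> g [/genW].
split; first by split; [exact: gen_tone | exists tone; split; [exact: gen_tone|]].
split=> [g1 g2 [S_g1 [h1 [S_h1 gh1]]] [S_g2 [h2 [S_h2 gh2]]] | g [Sg [h [Sh gh]]]].
  split; first exact: gen_tmul.
  by exists (tmul h2 h1); split; [exact: gen_tmul | exact: tinverse_tmul].
by exists h; split=> //; split=> //; exists g; split=> //; exact: tinverse_sym.
Qed.

Lemma gen_ind S (Q : vm -> Prop) : subgroupW (gen S) ->
    (forall s, S s -> Q s) -> Q tone ->
    (forall g h, gen S g -> gen S h -> Q g -> Q h -> Q (tmul g h)) ->
    (forall g h, gen S g -> gen S h -> tinverse g h -> Q g -> Q h) ->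
  forall g, gen S g -> Q g.
Proof.
move=> subS QS Q1 QM QV.
suff genQ : forall g, gen S g -> gen S g /\ Q g by move=> g /genQ[].
apply: gen_min => [|s Ss]; last by split; [exact: mem_gen | exact: QS].
split; first by move=> g [/(subgroupW_W subS)].
split; first by split; [exact: gen_tone|].
split=> [g h [Sg Qg] [Sh Qh] | g [Sg Qg]]; first by split; [exact: gen_tmul | exact: QM].
have [h [Sh gh]] := subgroupW_inverse subS Sg.
by exists h; split=> //; split=> //; exact: QV Qg.
Qed.

Section GroupAutomorphism.
Variables (G : vm -> Prop) (phi : vm -> vm).
Hypotheses (subG : subgroupW G) (phi_auto : group_auto G phi).

Lemma group_auto_tone : phi tone = tone.
Proof.
have [phiG [_ [_ phiM]]] := phi_auto; have G1 := subgroupW_tone subG.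
apply: functional_extensionality => w; apply: (W_inj (subgroupW_W subG (phiG _ G1))).
exact: esym (congr1 (fun f => f w) (phiM _ _ G1 G1)).
Qed.

Lemma group_auto_gpow g k : G g -> phi (gpow g k) = gpow (phi g) k.
Proof.
have [_ [_ [_ phiM]]] := phi_auto; move=> Gg; elim: k => [|k IHk].
  exact: group_auto_tone.
by rewrite gpowS phiM ?IHk //; exact: subgroupW_gpow.
Qed.

Lemma group_auto_tinverse g h : G g -> G h -> tinverse g h -> tinverse (phi g) (phi h).
Proof.
have [_ [_ [_ phiM]]] := phi_auto; move=> Gg Gh [gh hg].
by split; rewrite -phiM // ?gh ?hg group_auto_tone.
Qed.

End GroupAutomorphism.

Definition level_period G n k := forall g, G g -> forall u, size u = n -> iter k g u = u.

Definition power_subgroup G e := gen (fun s => exists2 g, G g & s = gpow g e).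

Section PowerSubgroup.
Variables (G : vm -> Prop) (e : nat).
Hypothesis subG : subgroupW G.
Local Notation H := (power_subgroup G e).

Lemma power_subgroup_subgroup : subgroupW H.
Proof.
apply: subgroupW_gen => [s [g Gg ->] | s [g Gg ->]].
  exact: W_gpow (subgroupW_W subG Gg).
have [h [Gh gh]] := subgroupW_inverse subG Gg.
by exists (gpow h e); split; [exists h | exact: tinverse_gpow].
Qed.

Lemma power_subgroup_sub g : H g -> G g.
Proof. by apply: gen_min => // s [h Gh ->]; exact: subgroupW_gpow. Qed.

Lemma mem_power_subgroup g : G g -> H (gpow g e).
Proof. by move=> Gg; apply: mem_gen; exists g. Qed.

Lemma power_subgroup_characteristic : Defs.characteristic H G.
Proof.
have subH := power_subgroup_subgroup.
split=> //; split=> [|phi phi_auto]; first exact: power_subgroup_sub.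
have [phiG [_ [phi_onto phiM]]] := phi_auto.
have phi1 := group_auto_tone subG phi_auto.
have phiX := group_auto_gpow subG phi_auto.
have phiV g h : H g -> H h -> tinverse g h -> tinverse (phi g) (phi h).
  by move=> /power_subgroup_sub Gg /power_subgroup_sub; exact: group_auto_tinverse.
have phiM_H g h : H g -> H h -> phi (tmul g h) = tmul (phi g) (phi h).
  by move=> /power_subgroup_sub Gg /power_subgroup_sub; exact: phiM.
split; apply: gen_ind => //.
- by move=> s [g Gg ->]; rewrite phiX //; exact: mem_power_subgroup (phiG _ Gg).
- by rewrite phi1; exact: gen_tone.
- by move=> g h Hg Hh Hphig Hphih; rewrite phiM_H //; exact: gen_tmul.
- by move=> g h Hg Hh gh Hphig; exact: subgroupW_tinverse subH Hphig (phiV _ _ Hg Hh gh).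
- move=> s [g Gg ->]; have [g' [Gg' <-]] := phi_onto g Gg.
  by exists (gpow g' e); split; [exact: mem_power_subgroup | exact: phiX].
- by exists tone; split; [exact: gen_tone | exact: phi1].
- move=> _ _ _ _ [a [Ha <-]] [b [Hb <-]].
  by exists (tmul a b); split; [exact: gen_tmul | exact: phiM_H].
- move=> g h _ _ gh [a [Ha def_g]]; rewrite -def_g in gh.
  have [b [Hb ab]] := subgroupW_inverse subH Ha.
  by exists b; split=> //; exact: tinverse_uniq (phiV _ _ Ha Hb ab) gh.
Qed.

Lemma power_subgroup_fix n : level_period G n e ->
  forall h, H h -> forall u, size u = n -> h u = u.
Proof.
move=> G_period; apply: gen_ind => //; first exact: power_subgroup_subgroup.
- by move=> s [g Gg ->] u; exact: G_period.
- by move=> g h _ _ gu hu u size_u; rewrite /tmul gu ?hu.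
- by move=> g h _ _ /tinverseP[gK _] gu u size_u; rewrite -{1}(gu u size_u) gK.
Qed.

End PowerSubgroup.

Definition finitary_generator s := exists v (pi : {perm X}), s = vstar v (perm_act pi).

Lemma F_gen : @F X = gen finitary_generator.
Proof.
apply: functional_extensionality => g; apply: propositional_extensionality.
split=> Fg G subG SG; apply: Fg => //; first by move=> v pi; apply: SG; exists v, pi.
by move=> s [v [pi ->]]; exact: SG.
Qed.

Lemma F_subgroup : subgroupW (@F X).
Proof.
rewrite F_gen; apply: subgroupW_gen => s [v [pi ->]].
  exact/W_vstar/W_perm_act.
exists (vstar v (perm_act pi^-1)); split; first by exists v, pi^-1%g.
exact/vstar_tinverse/perm_act_tinverse.
Qed.

Lemma F_vstar1 x g : F g -> F (vstar [:: x] g).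
Proof.
have subF := F_subgroup; rewrite F_gen in subF *; move: g; apply: gen_ind => //.
- by move=> s [v [pi ->]]; apply: mem_gen; exists (x :: v), pi; rewrite -vstar_cat.
- by rewrite vstar_tone; exact: gen_tone.
- by move=> g h _ _ Fxg Fxh; rewrite vstar_tmul; exact: gen_tmul.
- by move=> g h _ _ gh Fxg; exact: subgroupW_tinverse subF Fxg (vstar_tinverse _ gh).
Qed.

Lemma F_level_transitive n : level_transitive (@F X) n.
Proof.
elim: n => [|n IHn] u w.
  move=> /size0nil-> /size0nil->.
  by exists tone; split=> //; exact: subgroupW_tone F_subgroup.
case: u => [|x u] //; case: w => [|y w] // [size_u] [size_w].
have [g [Fg gu]] := IHn u w size_u size_w.
exists (tmul (perm_act (tperm x y)) (vstar [:: y] g)); split.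
  apply: subgroupW_tmul F_subgroup _ (F_vstar1 y Fg).
  by rewrite F_gen -(vstar_nil (perm_act _)); apply: mem_gen; exists [::], (tperm x y).
by rewrite /tmul /= tpermL -cat1s vstar_prefix gu.
Qed.

Lemma state_finitary_generator u (pi : {perm X}) v :
  gen finitary_generator (state (vstar u (perm_act pi)) v).
Proof.
case: (boolP (prefix v u)) => [/prefixP[u' ->] | vu].
  by rewrite state_vstar_cat; apply: mem_gen; exists u', pi.
suff -> : state (vstar u (perm_act pi)) v = tone by exact: gen_tone.
case: (boolP (prefix u v)) => [/prefixP[[|x v'] def_v] | uv].
- by rewrite def_v cats0 prefix_refl in vu.
- by rewrite def_v state_vstar_prefix state_perm_act_cons.
- exact: state_vstar_incomparable.
Qed.

Definition self_similar G := forall g v, G g -> G (state g v).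

Lemma F_self_similar : self_similar (@F X).
Proof.
have subF := F_subgroup; rewrite /self_similar F_gen in subF *.
suff genQ g : gen finitary_generator g -> forall v, gen finitary_generator (state g v).
  by move=> g v /genQ.
move: g; apply: gen_ind => //.
- by move=> s [u [pi ->]] v; exact: state_finitary_generator.
- by move=> v; rewrite state_tone; exact: gen_tone.
- move=> g h Fg Fh Fsg Fsh v; rewrite state_tmul; first exact: gen_tmul.
    exact: subgroupW_W subF Fg.
  exact: subgroupW_W subF Fh.
- move=> g h Fg Fh gh Fsg v; have /tinverseP[_ hK] := gh.
  have := state_tinverse (h v) (subgroupW_W subF Fg) (subgroupW_W subF Fh) gh.
  by rewrite hK; exact: subgroupW_tinverse subF (Fsg (h v)).
Qed.

Lemma W_self_similar : self_similar W.
Proof. by move=> g v; exact: W_state. Qed.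

Lemma F_layered : layered (@F X).
Proof. by split; [exact: F_subgroup | split; [exact: F_level_transitive | exact: F_vstar1]]. Qed.

Lemma W_layered : layered W.
Proof.
split; first exact: W_subgroup.
split=> [n u w size_u size_w | x g]; last exact: W_vstar.
have [g [Fg gu]] := F_level_transitive size_u size_w.
by exists g; split=> //; exact: subgroupW_W F_subgroup Fg.
Qed.

Section Saturation.
Variable G : vm -> Prop.
Hypotheses (subG : subgroupW G) (G_trans : forall m, level_transitive G m).
Hypotheses (G_vstar1 : forall x g, G g -> G (vstar [:: x] g)) (G_self_similar : self_similar G).

Lemma layered_vstar v g : G g -> G (vstar v g).
Proof.
elim: v => [|x v IHv] Gg; first by rewrite vstar_nil.
by rewrite -cat1s vstar_cat; exact/G_vstar1/IHv.
Qed.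

Section Level.
Variable n : nat.

Lemma level_exponent : exists2 e, 0 < e & forall k, level_period G n k <-> e %| k.
Proof.
have [N N_gt0 W_N] := W_level_exponent n.
apply: (nat_ideal_dvd (P := level_period G n)) N_gt0 _ _ _.
- by move=> g /(subgroupW_W subG); exact: W_N.
- by move=> a b Pa Pb g Gg u size_u; rewrite iterD Pb ?Pa.
- by move=> a b ba Pa Pb g Gg u size_u; rewrite -{1}(Pb g Gg u size_u) -iterD subnK // Pa.
Qed.

Section Exponent.
Variable e : nat.
Hypotheses (e_gt0 : 0 < e) (e_period : forall k, level_period G n k <-> e %| k).
Local Notation H := (power_subgroup G e).

Lemma level_period_exponent : level_period G n e.
Proof. exact/e_period. Qed.

Lemma orbit_full_p_part p : prime p -> p %| e ->
  exists g0 u0 L, [/\ G g0, size u0 = n, forall k, iter k g0 u0 = u0 <-> L %| k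
                    & p ^ logn p e %| L].
Proof.
move=> p_pr pe; apply: NNPP => no_orbit.
have ep_gt0 : 0 < e %/ p by rewrite divn_gt0 ?prime_gt0 // dvdn_leq.
have : e %| e %/ p.
  apply/e_period => g Gg u size_u.
  have [L _ L_period] := iter_period e_gt0 (level_period_exponent Gg size_u).
  apply/L_period; apply: dvdn_div_prime p_pr pe _ _.
    by apply/L_period; exact: level_period_exponent.
  by apply/negP => pL; apply: no_orbit; exists g, u, L.
by move/(dvdn_leq ep_gt0); rewrite leqNgt ltn_Pdiv ?prime_gt1.
Qed.

Variable v : seq X.
Hypothesis size_v : size v = n.

Lemma orbit_full_p_part_at p : prime p -> p %| e ->
  exists g1 L, [/\ G g1, forall k, iter k g1 v = v <-> L %| k & p ^ logn p e %| L].
Proof.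
move=> p_pr pe; have [g0 [u0 [L [Gg0 size_u0 L_period pL]]]] := orbit_full_p_part p_pr pe.
have [t [Gt tv]] := G_trans size_v size_u0.
have [ti [Gti /tinverseP[tK tiK]]] := subgroupW_inverse subG Gt.
exists (tmul t (tmul g0 ti)), L; split=> // [|k].
  by do 2!apply: subgroupW_tmul => //.
rewrite -L_period (iter_conjugate g0 tK tiK) tv.
by split=> [/(congr1 t) | ->]; rewrite ?tiK -?tv.
Qed.

Definition state_power k := forall c, G c -> exists2 h, H h & state h v = gpow c k.

Lemma power_subgroup_W h : H h -> W h.
Proof. exact: subgroupW_W (power_subgroup_subgroup _ subG). Qed.

Lemma power_subgroup_fix_at h : H h -> h v = v.
Proof.
by move=> Hh; apply: (power_subgroup_fix subG _ Hh size_v); exact: level_period_exponent.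
Qed.

Lemma state_power_add a b : state_power a -> state_power b -> state_power (a + b).
Proof.
move=> Sa Sb c Gc; have [h1 H1 s1] := Sa c Gc; have [h2 H2 s2] := Sb c Gc.
exists (tmul h1 h2); first exact: gen_tmul.
rewrite state_tmul; try exact: power_subgroup_W.
by rewrite power_subgroup_fix_at // s1 s2 gpowD.
Qed.

Lemma state_power_sub a b : b <= a ->
  state_power a -> state_power b -> state_power (a - b).
Proof.
move=> ba Sa Sb c Gc; have [h1 H1 s1] := Sa c Gc; have [h2 H2 s2] := Sb c Gc.
have [h2i [H2i h2_h2i]] := subgroupW_inverse (power_subgroup_subgroup _ subG) H2.
exists (tmul h1 h2i); first exact: gen_tmul.
have := state_tinverse v (power_subgroup_W H2) (power_subgroup_W H2i) h2_h2i.
rewrite power_subgroup_fix_at // s2 => /tinverseP[cK _].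
rewrite state_tmul; try exact: power_subgroup_W.
rewrite power_subgroup_fix_at // s1; apply: functional_extensionality => w.
by rewrite -{1}(subnK ba) gpowD /tmul cK.
Qed.

Lemma state_power_exponent : state_power e.
Proof.
move=> c Gc; exists (gpow (vstar v c) e); first exact: mem_power_subgroup (layered_vstar v Gc).
have Wc := subgroupW_W subG Gc.
by rewrite state_gpow_fix ?state_vstar_self ?vstar_fix //; exact: W_vstar.
Qed.

Lemma state_power_div_period g1 L : G g1 -> (forall k, iter k g1 v = v <-> L %| k) ->
  state_power (e %/ L).
Proof.
move=> Gg1 L_period c Gc.
have L_dvd_e : L %| e by apply/L_period; exact: level_period_exponent.
have L_gt0 : 0 < L := dvdn_gt0 e_gt0 L_dvd_e.
have [Wg1 Wc] := (subgroupW_W subG Gg1, subgroupW_W subG Gc).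
have [ai [Gai /tinverseP[_ aiK]]] :=
  subgroupW_inverse subG (G_self_similar v (subgroupW_gpow L subG Gg1)).
pose d := tmul c ai; pose g := tmul (vstar v d) g1.
have Gd : G d by exact: subgroupW_tmul.
have Wd := subgroupW_W subG Gd.
have gL_state : state (gpow g L) v = c.
  rewrite state_gpow_vstar_tmul // => [|j /andP[j_gt0 j_lt]].
    by apply: functional_extensionality => w; rewrite /tmul aiK.
  by apply/negP => /eqP/L_period/(dvdn_leq j_gt0); rewrite leqNgt j_lt.
have gL_fix : gpow g L v = v by rewrite gpow_vstar_tmul_level //; exact/L_period.
have Gg : G g by apply: subgroupW_tmul Gg1 => //; exact: layered_vstar.
exists (gpow g e); first exact: mem_power_subgroup Gg.
rewrite -{1}(divnK L_dvd_e) gpowM state_gpow_fix ?gL_state //.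
exact/W_gpow/(subgroupW_W subG Gg).
Qed.

Lemma state_power_coprime p : prime p -> exists2 k, state_power k & ~~ (p %| k).
Proof.
move=> p_pr; case: (boolP (p %| e)) => pe; last by exists e; first exact: state_power_exponent.
have [g1 [L [Gg1 L_period pL]]] := orbit_full_p_part_at p_pr pe.
exists (e %/ L); first exact: state_power_div_period L_period.
apply: prime_ndvd_div_pfactor => //; apply/L_period; exact: level_period_exponent.
Qed.

Lemma state_power_one : state_power 1.
Proof.
have [d d_gt0 d_ideal] := nat_ideal_dvd e_gt0 state_power_exponent
  state_power_add state_power_sub.
suff d1 : d = 1 by apply/d_ideal; rewrite d1.
apply/eqP; rewrite eqn_leq d_gt0 andbT leqNgt; apply/negP => d_gt1.
have [k /d_ideal dk pk] := state_power_coprime (pdiv_prime d_gt1).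
by move: pk; rewrite (dvdn_trans (pdiv_dvd d) dk).
Qed.

Lemma power_subgroup_states_transitive m :
  level_transitive (fun k => exists2 h, H h & k = state h v) m.
Proof.
move=> u w size_u size_w; have [c [Gc cu]] := G_trans size_u size_w.
have [h Hh hc] := state_power_one Gc.
by exists (state h v); split; [exists h | rewrite hc].
Qed.

End Exponent.
End Level.

Lemma power_subgroups_saturate : saturated G.
Proof.
move=> n; have [e e_gt0 e_period] := level_exponent n.
exists (power_subgroup G e); split; first exact: power_subgroup_characteristic.
split; first exact: power_subgroup_fix (level_period_exponent e_period).
by move=> v size_v m; exact: power_subgroup_states_transitive.
Qed.

End Saturation.

Lemma layered_self_similar_saturated G : layered G -> self_similar G -> saturated G.
Proof. by case=> subG [G_trans G_vstar1]; exact: power_subgroups_saturate. Qed.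

End TreeAutomorphisms.

Theorem proposition3p10 (X : finType) (hX : 1 < #|X|) :
  (layered (@F X) /\ saturated (@F X)) /\ (layered (@W X) /\ saturated (@W X)).
Proof.
have [F_lay W_lay] := (F_layered X, W_layered X).
split; split=> //; apply: layered_self_similar_saturated => //.
  exact: F_self_similar.
exact: W_self_similar.
Qed.
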